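(* Assume $N\subseteq Z(G)$ and let $\sigma\in Z^2(\bar G,N)$ be a $2$-cocycle of the central extension $1\to N\to G\to\bar G\to 1$, given by $\sigma(\bar x,\bar y)=s(\bar x)s(\bar y)s(\bar x\bar y)^{-1}$ for a set-theoretic section $s:\bar G\to G$ with $s(\bar 1)=1$. Then there is an isomorphism of quasi-Hopf algebras $$D^{\omega}(G,N)\cong \mathbb{C}[N]\#_\sigma D^{\omega}(\bar G),$$ where $\mathbb{C}[N]\#_\sigma D^{\omega}(\bar G)$ is the vector space $\mathbb{C}[N]\otimes D^{\omega}(\bar G)$ with basis $m\#(e(\bar g)\bowtie\bar x)$ ($m\in N$, $\bar g,\bar x\in\bar G$), multiplication $$\big(m\#(e(\bar g)\bowtie\bar x)\big)\big(n\#(e(\bar h)\bowtie\bar y)\big)= mn\,\sigma(\bar x,\bar y)\#\big((e(\bar g)\bowtie\bar x)(e(\bar h)\bowtie\bar y)\big),$$ coproduct $\Delta(m\#(e(\bar g)\bowtie\bar x))=\sum_{\bar a\bar b=\bar g}\gamma_{\bar x}(\bar a,\bar b)\,(m\#(e(\bar a)\bowtie\bar x))\otimes(m\#(e(\bar b)\bowtie\bar x))$, and associator, counit, antipode, $\alpha,\beta$ those of $D^{\omega}(\bar G)$ (with $1\in N$ in the first tensor factor for $\Phi,\alpha,\beta$, counit $\epsilon(m\#u)=\epsilon(u)$, and antipode $S(m\#(e(\bar g)\bowtie \bar x))$ given by the antipode of $D^\omega(\bar G)$ twisted correspondingly so that the isomorphism $m\#(e(\bar g)\bowtie\bar x)\mapsto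 e(\bar g)\bowtie m\,s(\bar x)$ holds).
   Context: Notation. $G$ is a finite group, $N\trianglelefteq G$, $\bar G=G/N$, $\bar g=gN$, $\bar g^x=\bar x^{-1}\bar g\bar x$. $\omega$ is a normalized $\mathbb{C}^*$-valued $3$-cocycle on $\bar G$, and $\theta_{\bar g}(\bar x,\bar y)=\frac{\omega(\bar g,\bar x,\bar y)\omega(\bar x,\bar y,\bar g^{xy})}{\omega(\bar x,\bar g,\bar y^{g})}$, $\gamma_{\bar g}(\bar x,\bar y)=\frac{\omega(\bar x,\bar y,\bar g)\omega(\bar g,\bar x^{g},\bar y^{g})}{\omega(\bar x,\bar g,\bar y^{g})}$. $D^{\omega}(G,N)$ is the quasi-Hopf algebra with basis $e(\bar g)\bowtie x$ ($\bar g\in\bar G$, $x\in G$), product $(e(\bar g)\bowtie x)(e(\bar h)\bowtie y)=\delta_{\bar g^x,\bar h}\theta_{\bar g}(\bar x,\bar y)e(\bar g)\bowtie xy$, coproduct $\Delta(e(\bar g)\bowtie x)=\sum_{\bar a\bar b=\bar g}\gamma_{\bar x}(\bar a,\bar b)(e(\bar a)\bowtie x)\otimes(e(\bar b)\bowtie x)$, associator $\Phi=\sum\omega(\bar g,\bar h,\bar k)^{-1}(e(\bar g)\bowtie1)\otimes(e(\bar h)\bowtie1)\otimes(e(\bar k)\bowtie1)$, counit $\epsilon(e(\bar g)\bowtie x)=\delta_{\bar g,\bar 1}$, antipode $S(e(\bar g)\bowtie x)=\theta_{\bar g^{-1}}(\bar x,\bar x^{-1})\gamma_{\bar x}(\bar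 g,\bar g^{-1})^{-1}e((\bar g^{-1})^x)\bowtie x^{-1}$, $\alpha=1$, $\beta=\sum_{\bar g}\omega(\bar g,\bar g^{-1},\bar g)e(\bar g)\bowtie 1$. The twisted quantum double $D^{\omega}(\bar G)$ is $D^{\omega}(\bar G,\{1\})$, with basis $e(\bar g)\bowtie\bar x$, $\bar g,\bar x\in\bar G$, and the same formulas. *)

From HB Require Import structures.
From mathcomp Require Import all_boot all_order all_fingroup all_solvable all_algebra.
Set Implicit Arguments. Unset Strict Implicit. Unset Printing Implicit Defensive.
Import GRing.Theory.
Local Open Scope ring_scope.

(* Vectors are {ffun B -> F}; tensor squares/cubes are functions on B*B,      *)
(* B*B*B.  Structure maps are given on basis elements and extended linearly. *)
Section QHA.
Variable F : fieldType.

Record qha_data (B : finType) := QHAData {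
  qmul : B -> B -> {ffun B -> F};
  qunit : {ffun B -> F};
  qcomul : B -> {ffun B * B -> F};
  qcounit : B -> F;
  qantipode : B -> {ffun B -> F};
  qalpha : {ffun B -> F};
  qbeta : {ffun B -> F};
  qPhi : {ffun B * B * B -> F} }.

Definition mulV (B : finType) (d : qha_data B) (u v : {ffun B -> F}) : {ffun B -> F} :=
  [ffun c => \sum_(b : B) \sum_(b' : B) u b * v b' * qmul d b b' c].
Definition comulV (B : finType) (d : qha_data B) (u : {ffun B -> F}) : {ffun B * B -> F} :=
  [ffun c => \sum_(b : B) u b * qcomul d b c].
Definition counitV (B : finType) (d : qha_data B) (u : {ffun B -> F}) : F :=
  \sum_(b : B) u b * qcounit d b.
Definition antipodeV (B : finType) (d : qha_data B) (u : {ffun B -> F}) : {ffun B -> F} :=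
  [ffun c => \sum_(b : B) u b * qantipode d b c].

Definition delta (A : finType) (a : A) : {ffun A -> F} := [ffun a0 => (a0 == a)%:R].

Definition tensor2 (A B : finType) (f : {ffun A -> F} -> {ffun B -> F})
    (w : {ffun A * A -> F}) : {ffun B * B -> F} :=
  [ffun c => \sum_(a : A) \sum_(a' : A) w (a, a') * f (delta a) c.1 * f (delta a') c.2].
Definition tensor3 (A B : finType) (f : {ffun A -> F} -> {ffun B -> F})
    (w : {ffun A * A * A -> F}) : {ffun B * B * B -> F} :=
  [ffun c => \sum_(a : A) \sum_(a' : A) \sum_(a'' : A)
     w (a, a', a'') * f (delta a) c.1.1 * f (delta a') c.1.2 * f (delta a'') c.2].

Definition qha_iso (A B : finType) (dA : qha_data A) (dB : qha_data B)
    (f : {ffun A -> F} -> {ffun B -> F}) : Prop :=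
  (forall (a : F) (u v : {ffun A -> F}), f [ffun x => a * u x + v x] = [ffun y => a * f u y + f v y]) /\
  bijective f /\
  (forall u v, f (mulV dA u v) = mulV dB (f u) (f v)) /\
  f (qunit dA) = qunit dB /\
  (forall u, comulV dB (f u) = tensor2 f (comulV dA u)) /\
  (forall u, counitV dB (f u) = counitV dA u) /\
  tensor3 f (qPhi dA) = qPhi dB /\
  (forall u, f (antipodeV dA u) = antipodeV dB (f u)) /\
  f (qalpha dA) = qalpha dB /\
  f (qbeta dA) = qbeta dB.

End QHA.

Definition normalized_3cocycle (F : fieldType) (Q : finGroupType) (Qs : {set Q})
    (om : Q -> Q -> Q -> F) : Prop :=
  (forall g h k, g \in Qs -> h \in Qs -> k \in Qs -> om g h k != 0) /\
  (forall g h k l, g \in Qs -> h \in Qs -> k \in Qs -> l \in Qs ->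
     om h k l * om g (h * k)%g l * om g h k = om (g * h)%g k l * om g h (k * l)%g) /\
  (forall g h, g \in Qs -> h \in Qs ->
     om 1%g g h = 1 /\ om g 1%g h = 1 /\ om g h 1%g = 1).

Definition theta (F : fieldType) (Q : finGroupType) (om : Q -> Q -> Q -> F) (g x y : Q) : F :=
  om g x y * om x y (g ^ (x * y))%g / om x g (y ^ g)%g.
Definition gamma (F : fieldType) (Q : finGroupType) (om : Q -> Q -> Q -> F) (g x y : Q) : F :=
  om x y g * om g (x ^ g)%g (y ^ g)%g / om x g (y ^ g)%g.

(* D^omega(G,N), generically: basis e(gbar) |><| x with gbar in Qs, x in H,   *)
(* and pi : T -> Q the projection x |-> xbar.                                *)
Section Double.
Variables (F : fieldType) (Q T : finGroupType) (Qs : {group Q}) (H : {group T})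
  (pi : T -> Q) (om : Q -> Q -> Q -> F).

Definition dbasis := {p : Q * T | (p.1 \in Qs) && (p.2 \in H)}.

Definition dmul (b b' : dbasis) : {ffun dbasis -> F} :=
  [ffun c : dbasis =>
     if (((val b).1 ^ pi (val b).2)%g == (val b').1) && (val c == ((val b).1, ((val b).2 * (val b').2)%g))
     then theta om (val b).1 (pi (val b).2) (pi (val b').2) else 0].

Definition dunit : {ffun dbasis -> F} :=
  [ffun c : dbasis => if (val c).2 == 1%g then 1 else 0].

Definition dcomul (b : dbasis) : {ffun dbasis * dbasis -> F} :=
  [ffun c : dbasis * dbasis =>
     if [&& (val c.1).2 == (val b).2, (val c.2).2 == (val b).2
          & ((val c.1).1 * (val c.2).1)%g == (val b).1]
     then gamma om (pi (val b).2) (val c.1).1 (val c.2).1 else 0].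

Definition dcounit (b : dbasis) : F := if (val b).1 == 1%g then 1 else 0.

Definition dantipode (b : dbasis) : {ffun dbasis -> F} :=
  [ffun c : dbasis =>
     if val c == ((((val b).1)^-1 ^ pi (val b).2)%g, (((val b).2)^-1)%g)
     then theta om ((val b).1)^-1%g (pi (val b).2) (pi (val b).2)^-1%g
          / gamma om (pi (val b).2) (val b).1 ((val b).1)^-1%g
     else 0].

Definition dbeta : {ffun dbasis -> F} :=
  [ffun c : dbasis => if (val c).2 == 1%g then om (val c).1 ((val c).1)^-1%g (val c).1 else 0].

Definition dPhi : {ffun dbasis * dbasis * dbasis -> F} :=
  [ffun c : dbasis * dbasis * dbasis =>
     if [&& (val c.1.1).2 == 1%g, (val c.1.2).2 == 1%g & (val c.2).2 == 1%g]
     then (om (val c.1.1).1 (val c.1.2).1 (val c.2).1)^-1 else 0].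

Definition Ddata : qha_data F dbasis :=
  QHAData dmul dunit dcomul dcounit dantipode dunit dbeta dPhi.

End Double.

Definition DGN (F : fieldType) (gT : finGroupType) (G N : {group gT})
    (om : coset_of N -> coset_of N -> coset_of N -> F) :=
  Ddata (G / N)%G G (coset N) om.

Definition DGbar (F : fieldType) (gT : finGroupType) (G N : {group gT})
    (om : coset_of N -> coset_of N -> coset_of N -> F) :=
  Ddata (G / N)%G (G / N)%G id om.
Arguments DGN {F gT} G N om.
Arguments DGbar {F gT} G N om.

Section Smash.
Variables (F : fieldType) (gT : finGroupType) (G N : {group gT})
  (om : coset_of N -> coset_of N -> coset_of N -> F) (s : coset_of N -> gT).

Definition sigma2 (x y : coset_of N) : gT := (s x * s y * (s (x * y)%g)^-1)%g.

Definition Nbasis := {m : gT | m \in N}.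
Definition sbasis := (Nbasis * dbasis (G / N)%G (G / N)%G)%type.

Let dQ := DGbar G N om.

Definition smul (b b' : sbasis) : {ffun sbasis -> F} :=
  [ffun c : sbasis =>
     if val c.1 == (val b.1 * val b'.1 * sigma2 (val b.2).2 (val b'.2).2)%g
     then qmul dQ b.2 b'.2 c.2 else 0].

Definition sunit : {ffun sbasis -> F} :=
  [ffun c : sbasis => if val c.1 == 1%g then qunit dQ c.2 else 0].

Definition scomul (b : sbasis) : {ffun sbasis * sbasis -> F} :=
  [ffun c : sbasis * sbasis =>
     if (c.1.1 == b.1) && (c.2.1 == b.1) then qcomul dQ b.2 (c.1.2, c.2.2) else 0].

Definition scounit (b : sbasis) : F := qcounit dQ b.2.

Definition santipode (b : sbasis) : {ffun sbasis -> F} :=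
  [ffun c : sbasis =>
     if val c.1 == ((val b.1)^-1 * (sigma2 (val b.2).2 ((val b.2).2)^-1)^-1)%g
     then qantipode dQ b.2 c.2 else 0].

Definition salpha : {ffun sbasis -> F} :=
  [ffun c : sbasis => if val c.1 == 1%g then qalpha dQ c.2 else 0].

Definition sbeta : {ffun sbasis -> F} :=
  [ffun c : sbasis => if val c.1 == 1%g then qbeta dQ c.2 else 0].

Definition sPhi : {ffun sbasis * sbasis * sbasis -> F} :=
  [ffun c : sbasis * sbasis * sbasis =>
     if [&& val c.1.1.1 == 1%g, val c.1.2.1 == 1%g & val c.2.1 == 1%g]
     then qPhi dQ (c.1.1.2, c.1.2.2, c.2.2) else 0].

Definition smash : qha_data F sbasis :=
  QHAData smul sunit scomul scounit santipode salpha sbeta sPhi.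

End Smash.
Arguments smash {F gT} G N om s.
Arguments sigma2 {gT N} s x y.

From HB Require Import structures.
From mathcomp Require Import all_boot all_order all_fingroup all_solvable all_algebra.
Set Implicit Arguments. Unset Strict Implicit. Unset Printing Implicit Defensive.
Import GRing.Theory.
Local Open Scope ring_scope.

(* Every x in G is uniquely m * s(xbar) with m = npart x := x * s(xbar)^-1 in N,
   and since N is central, npart (x * y) = npart x * npart y * sigma(xbar, ybar).
   Hence e(g) |><| x |-> npart x # (e(g) |><| xbar) is a bijection between the two
   bases under which all structure constants agree: the omega-dependent factors
   only see xbar. *)

Lemma sum_mul_delta (F : fieldType) (A : finType) (f : A -> F) (x : A) :
  \sum_(a : A) f a * (x == a)%:R = f x.
Proof.
rewrite (bigD1 x) //= eqxx mulr1 big1 ?addr0 // => a.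
by rewrite eq_sym => /negbTE ->; rewrite mulr0.
Qed.

Lemma qha_iso_relabel (F : fieldType) (A B : finType)
    (dA : qha_data F A) (dB : qha_data F B) (phi : A -> B) (psi : B -> A) :
  cancel phi psi -> cancel psi phi ->
  (forall a a' c, qmul dB (phi a) (phi a') (phi c) = qmul dA a a' c) ->
  (forall c, qunit dB (phi c) = qunit dA c) ->
  (forall b a1 a2, qcomul dB (phi b) (phi a1, phi a2) = qcomul dA b (a1, a2)) ->
  (forall b, qcounit dB (phi b) = qcounit dA b) ->
  (forall a1 a2 a3, qPhi dB (phi a1, phi a2, phi a3) = qPhi dA (a1, a2, a3)) ->
  (forall b c, qantipode dB (phi b) (phi c) = qantipode dA b c) ->
  (forall c, qalpha dB (phi c) = qalpha dA c) ->
  (forall c, qbeta dB (phi c) = qbeta dA c) ->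
  qha_iso dA dB (fun u => [ffun c => u (psi c)]).
Proof.
move=> phiK psiK Hmul Hunit Hcomul Hcounit HPhi Hanti Halpha Hbeta.
have phi_bij : {on [pred i | true], bijective phi}.
  by exists psi => // y _; rewrite psiK.
split; first by move=> a u v; apply/ffunP=> c; rewrite !ffunE.
split.
  exists (fun v : {ffun B -> F} => [ffun a => v (phi a)]) => u;
  by apply/ffunP => c; rewrite !ffunE ?phiK ?psiK.
split.
  move=> u v; apply/ffunP => c; rewrite -[c]psiK !ffunE phiK.
  rewrite (reindex phi) //=; apply: eq_bigr => a _.
  rewrite (reindex phi) //=; apply: eq_bigr => a' _.
  by rewrite !ffunE !phiK Hmul.
split; first by apply/ffunP => c; rewrite ffunE -Hunit psiK.
split.
  move=> u; apply/ffunP => -[c1 c2]; rewrite -[c1]psiK -[c2]psiK !ffunE /=.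
  rewrite (reindex phi) //=.
  under [in RHS]eq_bigr => a _ do under eq_bigr => a' _ do rewrite !ffunE /= !phiK.
  under [in RHS]eq_bigr => a _ do rewrite sum_mul_delta.
  rewrite sum_mul_delta; apply: eq_bigr => a _.
  by rewrite !ffunE phiK Hcomul.
split.
  move=> u; rewrite /counitV (reindex phi) //=; apply: eq_bigr => a _.
  by rewrite ffunE phiK Hcounit.
split.
  apply/ffunP => -[[c1 c2] c3]; rewrite -[c1]psiK -[c2]psiK -[c3]psiK !ffunE /=.
  under eq_bigr => a _ do under eq_bigr => a' _ do under eq_bigr => a'' _ do
    rewrite !ffunE /= !phiK.
  under eq_bigr => a _ do under eq_bigr => a' _ do rewrite sum_mul_delta.
  under eq_bigr => a _ do rewrite sum_mul_delta.
  by rewrite sum_mul_delta HPhi.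
split.
  move=> u; apply/ffunP => c; rewrite -[c]psiK !ffunE phiK.
  rewrite (reindex phi) //=; apply: eq_bigr => a _.
  by rewrite ffunE phiK Hanti.
split; first by apply/ffunP => c; rewrite ffunE -Halpha psiK.
by apply/ffunP => c; rewrite ffunE -Hbeta psiK.
Qed.

Section CentralExtension.
Variables (gT : finGroupType) (G N : {group gT}) (s : coset_of N -> gT).

Definition npart (x : gT) : gT := (x * (s (coset N x))^-1)%g.

Lemma npart_coset_eq x y :
  (npart x == npart y) && (coset N x == coset N y) = (x == y).
Proof.
apply/andP/eqP => [[/eqP E /eqP Ec] | ->]; last by rewrite !eqxx.
by move: E; rewrite /npart Ec => /mulIg.
Qed.

Hypothesis nNG : (N <| G)%g.
Hypothesis s_section : forall x, x \in (G / N)%g -> s x \in G /\ coset N (s x) = x.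

Let nN : {subset G <= ('N(N))%g} := subsetP (normal_norm nNG).

Lemma npart_in x : x \in G -> npart x \in N.
Proof.
move=> xG; have [sG sK] := s_section (mem_quotient N xG).
apply: coset_idr; first by rewrite nN // groupM ?groupV.
by rewrite morphM ?morphV ?groupV ?nN //= sK mulgV.
Qed.

Hypothesis centralN : (N \subset 'Z(G))%g.

Lemma npartM x y : x \in G -> y \in G ->
  npart (x * y)%g = (npart x * npart y * sigma2 s (coset N x) (coset N y))%g.
Proof.
move=> xG yG; have [sxG _] := s_section (mem_quotient N xG).
have /centerP[_ cNy] := subsetP centralN _ (npart_in yG).
rewrite /sigma2 /npart morphM ?nN // !mulgA.
by rewrite -[in RHS](mulgA _ y) -(mulgA _ (y * _)%g) (cNy _ sxG) !mulgA !mulgKV.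
Qed.

Hypothesis s1 : s 1%g = 1%g.

Lemma npart1 : npart 1%g = 1%g.
Proof. by rewrite /npart morph1 s1 invg1 mulg1. Qed.

Lemma npartV x : x \in G ->
  npart x^-1%g = ((npart x)^-1 * (sigma2 s (coset N x) (coset N x)^-1)^-1)%g.
Proof.
move=> xG; rewrite -morphV ?nN //.
apply: (mulgI (npart x)); apply: (mulIg (sigma2 s (coset N x) (coset N x^-1))).
by rewrite -npartM ?groupV // mulgV npart1 mulKVg mulVg.
Qed.

Lemma npart_eq1 x : (npart x == 1%g) && (coset N x == 1%g) = (x == 1%g).
Proof. by have := npart_coset_eq x 1; rewrite npart1 morph1. Qed.

(* The insubd defaults are never used (see val_to_smash_N, val_to_smash_D and
   val_of_smash). *)
Definition to_smash_N (a : dbasis (G / N)%G G) : Nbasis N :=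
  insubd (Sub 1%g (group1 N)) (npart (val a).2).

Definition to_smash_D (a : dbasis (G / N)%G G) : dbasis (G / N)%G (G / N)%G :=
  insubd (Sub (1%g, 1%g) (introT andP (conj (group1 (G / N)%G) (group1 (G / N)%G))))
         ((val a).1, coset N (val a).2).

Definition to_smash a : sbasis G N := (to_smash_N a, to_smash_D a).

Definition of_smash (b : sbasis G N) : dbasis (G / N)%G G :=
  insubd (Sub (1%g, 1%g) (introT andP (conj (group1 (G / N)%G) (group1 G))))
         ((val b.2).1, val b.1 * s (val b.2).2)%g.

Lemma val_to_smash_N a : val (to_smash_N a) = npart (val a).2.
Proof. by have /andP[_ xG] := valP a; rewrite val_insubd npart_in. Qed.

Lemma val_to_smash_D a : val (to_smash_D a) = ((val a).1, coset N (val a).2).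
Proof. by have /andP[gQ xG] := valP a; rewrite val_insubd /= gQ mem_quotient. Qed.

Lemma val_of_smash b : val (of_smash b) = ((val b.2).1, val b.1 * s (val b.2).2)%g.
Proof.
rewrite val_insubd /=; have /andP[-> /s_section[sG _]] := valP b.2.
by rewrite groupM // (subsetP (normal_sub nNG)) ?(valP b.1).
Qed.

Lemma to_smashK : cancel to_smash of_smash.
Proof.
move=> a; apply: val_inj; rewrite val_of_smash val_to_smash_N val_to_smash_D /= mulgVK.
by case: (val a).
Qed.

Lemma of_smashK : cancel of_smash to_smash.
Proof.
move=> [m b]; have /andP[_ /s_section[_ sK]] := valP b.
have cosetE : coset N (val m * s (val b).2)%g = (val b).2.
  by rewrite coset_kerl ?(valP m).
congr (_, _); apply: val_inj.
  by rewrite val_to_smash_N val_of_smash /npart /= cosetE mulgK.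
by rewrite val_to_smash_D val_of_smash /= cosetE -surjective_pairing.
Qed.

Variables (F : fieldType) (om : coset_of N -> coset_of N -> coset_of N -> F).

Lemma to_smash_mul a a' c :
  qmul (smash G N om s) (to_smash a) (to_smash a') (to_smash c) = qmul (DGN G N om) a a' c.
Proof.
move: a a' c => [[g x] pa] [[g' x'] pa'] [[gc xc] pc].
have /andP[_ xG] := pa; have /andP[_ x'G] := pa'.
rewrite /= /smul /dmul !ffunE /= !val_to_smash_N !val_to_smash_D /= !xpair_eqE.
rewrite -(npart_coset_eq xc) (npartM xG x'G) morphM ?nN //.
by case: (_ == _) => /=; rewrite ?andbF.
Qed.

Lemma to_smash_unit c : qunit (smash G N om s) (to_smash c) = qunit (DGN G N om) c.
Proof.
rewrite /= /sunit /dunit !ffunE val_to_smash_N val_to_smash_D /= -(npart_eq1 (val c).2).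
by case: (_ == _); rewrite ?andbF.
Qed.

Lemma to_smash_comul b a1 a2 :
  qcomul (smash G N om s) (to_smash b) (to_smash a1, to_smash a2)
  = qcomul (DGN G N om) b (a1, a2).
Proof.
rewrite /= /scomul /dcomul !ffunE /= -![to_smash_N _ == _]val_eqE.
rewrite !val_to_smash_N !val_to_smash_D /=.
rewrite -(npart_coset_eq (val a1).2) -(npart_coset_eq (val a2).2).
by do ![case: (_ == _)].
Qed.

Lemma to_smash_counit b : qcounit (smash G N om s) (to_smash b) = qcounit (DGN G N om) b.
Proof. by rewrite /= /scounit /= /dcounit val_to_smash_D. Qed.

Lemma to_smash_Phi a1 a2 a3 :
  qPhi (smash G N om s) (to_smash a1, to_smash a2, to_smash a3)
  = qPhi (DGN G N om) (a1, a2, a3).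
Proof.
rewrite /= /sPhi /dPhi !ffunE /= !val_to_smash_N !val_to_smash_D /=.
rewrite -(npart_eq1 (val a1).2) -(npart_eq1 (val a2).2) -(npart_eq1 (val a3).2).
by do ![case: (_ == _)].
Qed.

Lemma to_smash_antipode b c :
  qantipode (smash G N om s) (to_smash b) (to_smash c) = qantipode (DGN G N om) b c.
Proof.
have /andP[_ xG] := valP b.
rewrite /= /santipode /dantipode !ffunE /= !val_to_smash_N !val_to_smash_D /=.
rewrite [sval c]surjective_pairing !xpair_eqE.
rewrite -(npart_coset_eq (val c).2 (val b).2^-1) (npartV xG) morphV ?nN //.
by do ![case: (_ == _)].
Qed.

Lemma to_smash_beta c : qbeta (smash G N om s) (to_smash c) = qbeta (DGN G N om) c.
Proof.
rewrite /= /sbeta /dbeta !ffunE val_to_smash_N val_to_smash_D /= -(npart_eq1 (val c).2).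
by case: (_ == _); rewrite ?andbF.
Qed.

End CentralExtension.

Theorem lemma2p2 (F : fieldType) (gT : finGroupType) (G N : {group gT})
  (om : coset_of N -> coset_of N -> coset_of N -> F) (s : coset_of N -> gT) :
  (N <| G)%g -> (N \subset 'Z(G))%g ->
  normalized_3cocycle (G / N)%g om ->
  (forall x, x \in (G / N)%g -> s x \in G /\ coset N (s x) = x) ->
  s 1%g = 1%g ->
  exists f, qha_iso (DGN G N om) (smash G N om s) f.
Proof.
move=> nNG NZ _ s_section s1; eexists.
apply: (qha_iso_relabel (to_smashK nNG s_section) (of_smashK nNG s_section)).
- exact: to_smash_mul.
- exact: to_smash_unit.
- exact: to_smash_comul.
- exact: to_smash_counit.
- exact: to_smash_Phi.
- exact: to_smash_antipode.
- exact: to_smash_unit.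
- exact: to_smash_beta.
Qed.
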